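(* Let $f$ be a scale mixture of normals density with shape parameter $\delta\in\Delta$. Consider the accelerated failure time model $y_j=\log(T_j)={\bf x}_j^\top\bm\beta+\varepsilon_j$, $j=1,\dots,n$, for survival times $T_1,\dots,T_n$, where $\bm\beta\in\mathbb{R}^p$, ${\bf X}=({\bf x}_1^\top,\dots,{\bf x}_n^\top)^\top$ is a known $n\times p$ design matrix of full column rank, and $\varepsilon_j\stackrel{i.i.d.}{\sim}\mathrm{TP}(0,\sigma,\delta,\gamma;f)$, with prior $\pi(\bm\beta,\sigma,\delta,\gamma)\propto\pi(\gamma)\pi(\delta)/\sigma^{q}$, $q\ge0$, $\pi(\gamma),\pi(\delta)$ proper. Suppose that $n_c\le n$ of the survival times are censored and $n_o=n-n_c$ are observed, and let ${\bf y}_o$ denote the uncensored (log) observations and ${\bf X}_o$ the corresponding design submatrix. If the posterior distribution of $(\bm\beta,\sigma,\delta,\gamma)$ based only on the $n_o$ uncensored observations (i.e. on the model for ${\bf y}_o$ with design matrix ${\bf X}_o$ and the same prior) is proper, then the posterior distribution of $(\bm\beta,\sigma,\delta,\gamma)$ based on the full (censored and uncensored) sample is proper.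
   Context: A scale mixture of normals density is $f(z\mid\delta)=\int_{\mathbb{R}_+}\tau^{1/2}\phi(\tau^{1/2}z)\,dH(\tau\mid\delta)$ with $\phi$ the standard normal density and $H(\cdot\mid\delta)$ a mixing distribution on $\mathbb{R}_+$. The two-piece distribution $\mathrm{TP}(\mu,\sigma,\delta,\gamma;f)$ has density $g(z)=\frac{2}{\sigma[a(\gamma)+b(\gamma)]}\left[f\!\left(\frac{z-\mu}{\sigma b(\gamma)}\Big|\delta\right)I(z<\mu)+f\!\left(\frac{z-\mu}{\sigma a(\gamma)}\Big|\delta\right)I(z\ge\mu)\right]$, $z\in\mathbb{R}$, with $\mu\in\mathbb{R}$, $\sigma>0$, $\gamma\in\Gamma\subset\mathbb{R}$, and $a(\cdot),b(\cdot)$ given positive functions on $\Gamma$. In the likelihood, an uncensored observation contributes the density $g(y_j-{\bf x}_j^\top\bm\beta)$ (with $\mu=0$) and a censored observation contributes the probability, under this error distribution, that $y_j$ lies in its censoring set (e.g. $(\log T_j,\infty)$ for right censoring, or an interval for interval censoring). The posterior is proper if likelihood times prior has finite integral. *)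

From HB Require Import structures.
From mathcomp Require Import all_boot all_order all_algebra.
From mathcomp Require Import all_classical all_reals all_analysis.
From mathcomp Require Import measurable_realfun.
Set Implicit Arguments. Unset Strict Implicit. Unset Printing Implicit Defensive.
Import Order.TTheory GRing.Theory Num.Theory.
Import numFieldNormedType.Exports.
Local Open Scope classical_set_scope.
Local Open Scope ring_scope.

Section Defs.
Context {R : realType}.
Local Notation leb := (@lebesgue_measure R).

(* Scale mixture of normals density
   f(z | delta) = \int_{R_+} tau^{1/2} phi(tau^{1/2} z) dH(tau | delta),
   phi = standard normal density; H delta = mixing distribution.
   (Extended-real valued: the mixture may be +oo at some points.) *)
Definition smn_density (T : Type) (H : T -> probability R R) (delta : T) (z : R)
  : \bar R :=
  (\int[H delta]_(tau in `[0%R, +oo[)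
     (Num.sqrt tau * normal_pdf 0 1 (Num.sqrt tau * z))%:E)%E.

Definition tp_density (T : Type) (H : T -> probability R R) (a b : R -> R)
  (mu sigma : R) (delta : T) (gamma : R) (z : R) : \bar R :=
  ((2 / (sigma * (a gamma + b gamma)))%:E *
   (if (z < mu)%R then smn_density H delta ((z - mu) / (sigma * b gamma))
    else smn_density H delta ((z - mu) / (sigma * a gamma))))%E.

(* Lebesgue integral over R^p (row vectors), as an iterated integral
   over the coordinates. *)
Fixpoint int_Rn (p : nat) : ('rV[R]_p -> \bar R) -> \bar R :=
  match p with
  | 0 => fun F => F 0
  | p'.+1 => fun F =>
      (\int[leb]_(x in setT) int_Rn (fun v : 'rV[R]_p' =>
          F (row_mx (\row_(i < 1) x) v)))%E
  end.

Definition lin_pred (n p : nat) (X : 'M[R]_(n, p)) (j : 'I_n) (beta : 'rV[R]_p)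
  : R := \sum_(i < p) X j i * beta 0 i.

(* Unnormalised posterior mass: integral of likelihood times prior
   pi(beta,sigma,delta,gamma) \propto pi(gamma) pi(delta) / sigma^q,
   with Lebesgue measure on beta in R^p and sigma in (0,oo), and the proper
   priors on gamma and delta given as probability measures. *)
Definition post_mass (d : measure_display) (D : measurableType d) (p : nat)
  (Pgamma : probability R R) (Gamma : set R) (Pdelta : probability D R)
  (q : R) (lik : 'rV[R]_p -> R -> D -> R -> \bar R) : \bar R :=
  (\int[Pgamma]_(gamma in Gamma) \int[Pdelta]_(delta in setT)
     \int[leb]_(sigma in `]0%R, +oo[)
        ((sigma `^ (- q))%:E * int_Rn (fun beta => lik beta sigma delta gamma)))%E.

(* Likelihood of the AFT model: uncensored j contributes g(y_j - x_j^T beta),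
   censored j contributes P(y_j in C_j) = \int_{C_j} g(y - x_j^T beta) dy. *)
Definition lik_full (T : Type) (H : T -> probability R R) (a b : R -> R)
  (n p : nat) (X : 'M[R]_(n, p)) (y : 'I_n -> R) (cens : 'I_n -> bool)
  (C : 'I_n -> set R) (beta : 'rV[R]_p) (sigma : R) (delta : T) (gamma : R)
  : \bar R :=
  (\prod_(j < n)
     (if cens j then
        \int[leb]_(t in C j) tp_density H a b 0 sigma delta gamma (t - lin_pred X j beta)
      else tp_density H a b 0 sigma delta gamma (y j - lin_pred X j beta)))%E.

Definition lik_obs (T : Type) (H : T -> probability R R) (a b : R -> R)
  (n p : nat) (X : 'M[R]_(n, p)) (y : 'I_n -> R) (cens : 'I_n -> bool)
  (beta : 'rV[R]_p) (sigma : R) (delta : T) (gamma : R) : \bar R :=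
  (\prod_(j < n | ~~ cens j)
      tp_density H a b 0 sigma delta gamma (y j - lin_pred X j beta))%E.

End Defs.

From HB Require Import structures.
From mathcomp Require Import all_boot all_order all_algebra.
From mathcomp Require Import all_classical all_reals all_analysis.
From mathcomp Require Import measurable_realfun.
From mathcomp Require Import ring lra.
Import Order.TTheory GRing.Theory Num.Theory.
Import numFieldNormedType.Exports.
Local Open Scope classical_set_scope.
Local Open Scope ring_scope.

(* A censored observation contributes the probability, under the two-piece
   error law, of its censoring set, hence a factor at most 1.  The full
   likelihood is therefore dominated, pointwise in the parameters, by the
   likelihood of the uncensored observations, and the posterior mass is
   monotone in the likelihood.  The two-piece density has mass at most 1 by
   Tonelli: for a fixed mixing variable tau > 0 its left and right pieces are
   half-normal densities of masses sigma b/2 and sigma a/2, which the constant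
   2 / (sigma (a + b)) normalises to 1, and H delta is a probability. *)

Section integral_extras.
Local Open Scope ereal_scope.
Context {d} {T : measurableType d} {R : realType} (mu : {measure set T -> \bar R}).

(* Unlike [ge0_le_integral], no measurability is needed: a nonnegative
   integral is a supremum over the simple functions below the integrand. *)
Lemma ge0_le_integral_nonmeas (D : set T) (f g : T -> \bar R) :
  (forall x, D x -> 0 <= f x) -> (forall x, D x -> f x <= g x) ->
  \int[mu]_(x in D) f x <= \int[mu]_(x in D) g x.
Proof.
move=> f0 fg; have g0 x : D x -> 0 <= g x by move=> Dx; exact: le_trans (f0 _ Dx) (fg _ Dx).
rewrite (ge0_integralE _ f0) (ge0_integralE _ g0).
apply: le_ereal_sup => _ [h hf <-]; exists h => //= x; apply: le_trans (hf x) _.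
by rewrite !patchE; case: ifPn => // /set_mem /fg.
Qed.

Lemma ge0_integral_le_setT (D : set T) (f : T -> \bar R) : (forall x, 0 <= f x) ->
  \int[mu]_(x in D) f x <= \int[mu]_x f x.
Proof.
move=> f0; rewrite integral_mkcond.
by apply: ge0_le_integral_nonmeas => x _; rewrite patchE; case: ifP.
Qed.

Lemma integral_EFin_indicE (A : set T) (g : T -> R) :
  \int[mu]_(x in A) (g x)%:E = \int[mu]_x (\1_A x * g x)%:E.
Proof.
rewrite integral_mkcond; apply: eq_integral => x _.
by rewrite patchE indicE; case: ifP; rewrite ?mul1r ?mul0r.
Qed.

End integral_extras.

Section lebesgue_translation.
Local Open Scope ereal_scope.
Context {R : realType} (c : R).
Local Notation leb := (@lebesgue_measure R).

Let mshift : measurable_fun setT (fun x : measurableTypeR R => (x + c)%R : measurableTypeR R).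
Proof. exact: measurable_funD. Qed.

Lemma lebesgue_measure_shift (A : set R) : measurable A ->
  pushforward leb (fun x : measurableTypeR R => (x + c)%R : measurableTypeR R) A = leb A.
Proof.
move=> mA; apply/esym/lebesgue_measure_unique => // _ [[x y]] _ <-.
rewrite /= /pushforward.
have -> : (+%R^~ c) @^-1` `]x, y]%classic = `](x - c)%R, (y - c)%R]%classic.
  by apply/seteqP; split => z /=; rewrite !in_itv /= lerBrDr ltrBlDr.
rewrite !lebesgue_measure_itv /= !lte_fin ltrBlDr subrK.
by case: ifP => // _; rewrite -!EFinD opprB addrA subrK.
Qed.

Lemma ge0_integral_shift (h : R -> \bar R) :
  measurable_fun setT h -> (forall x, 0 <= h x) ->
  \int[leb]_x h (x + c)%R = \int[leb]_x h x.
Proof.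
move=> mh h0.
have := @ge0_integral_pushforward _ _ _ _ R _ mshift leb setT h measurableT mh (fun x _ => h0 x).
rewrite preimage_setT => <-.
by apply: eq_measure_integral => A mA _ /=; rewrite lebesgue_measure_shift.
Qed.

End lebesgue_translation.

Lemma lee_prod (R : realType) (I : Type) (s : seq I) (P : pred I) (F G : I -> \bar R) :
  (forall i, P i -> 0 <= F i)%E -> (forall i, P i -> F i <= G i)%E ->
  (\prod_(i <- s | P i) F i <= \prod_(i <- s | P i) G i)%E.
Proof.
move=> F0 FG; suff /andP[] : (0 <= \prod_(i <- s | P i) F i <= \prod_(i <- s | P i) G i)%E by [].
apply: (big_ind2 (fun x y => 0 <= x <= y)%E) => [|x1 x2 y1 y2|i Pi].
- by rewrite lee01 lexx.
- move=> /andP[x10 x12] /andP[y10 y12].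
  by rewrite mule_ge0 //= lee_pmul.
- by rewrite F0 // FG.
Qed.

Lemma normal_pdf0Z (R : realType) (k s x : R) : 0 < k -> s != 0 ->
  normal_pdf 0 (k * s) (k * x) = k^-1 * normal_pdf 0 s x.
Proof.
move=> k0 s0; have ks0 : k * s != 0 by rewrite mulf_neq0 // gt_eqF.
rewrite /normal_pdf (negbTE s0) (negbTE ks0) /normal_peak /normal_fun !subr0.
have -> : Num.sqrt ((k * s) ^+ 2 * pi *+ 2) = k * Num.sqrt (s ^+ 2 * pi *+ 2).
  by rewrite exprMn -mulrA -mulrnAr sqrtrM ?sqr_ge0 // sqrtr_sqr ger0_norm ?ltW // mulrnAr.
have -> : - (k * x) ^+ 2 / ((k * s) ^+ 2 *+ 2) = - x ^+ 2 / (s ^+ 2 *+ 2).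
  by field; rewrite s0 gt_eqF.
by rewrite invfM mulrA.
Qed.

Lemma normal_pdf0N (R : realType) (s x : R) : s != 0 ->
  normal_pdf 0 s (- x) = normal_pdf 0 s x.
Proof. by move=> s0; rewrite /normal_pdf (negbTE s0) /normal_fun !subr0 sqrrN. Qed.

Section normal_pdf0_halves.
Local Open Scope ereal_scope.
Context {R : realType} (s : R) (s0 : s != 0%R).
Local Notation leb := (@lebesgue_measure R).

Let mpdf : measurable_fun setT (fun x => (normal_pdf 0 s x)%:E).
Proof. exact: measurableT_comp (measurable_normal_pdf _ _). Qed.

Let pdf_ge0 x : 0 <= (normal_pdf 0 s x)%:E.
Proof. by rewrite lee_fin normal_pdf_ge0. Qed.

Lemma integral_normal_pdf0_symmetric :
  \int[leb]_(x in `[0%R, +oo[) (normal_pdf 0 s x)%:E =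
  \int[leb]_(x in `]-oo, 0%R[) (normal_pdf 0 s x)%:E.
Proof.
rewrite ge0_integration_by_substitution0 //.
under eq_integral do rewrite normal_pdf0N //.
rewrite -(@setUitv1 _ _ _ _ true) // ge0_integral_setU //=; last 2 first.
- exact: measurable_funS mpdf.
- by apply/disj_setPS => x [/=]; rewrite in_itv /= => /[swap] ->; rewrite ltxx.
rewrite [X in _ + X]null_set_integral ?adde0 //=.
- exact: measurable_funS mpdf.
- exact: lebesgue_measure_set1.
Qed.

Lemma integral_normal_pdf0_halves :
  \int[leb]_(x in `]-oo, 0%R[) (normal_pdf 0 s x)%:E = (2^-1)%:E /\
  \int[leb]_(x in `[0%R, +oo[) (normal_pdf 0 s x)%:E = (2^-1)%:E.
Proof.
have total : \int[leb]_(x in `]-oo, 0%R[) (normal_pdf 0 s x)%:E +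
       \int[leb]_(x in `[0%R, +oo[) (normal_pdf 0 s x)%:E = 1.
  rewrite -ge0_integral_setU //=; last 2 first.
  - exact: measurable_funS mpdf.
  - by apply/disj_setPS => x [/=]; rewrite !in_itv /= andbT => /lt_le_trans/[apply]; rewrite ltxx.
  by rewrite itv_setU_setT integral_normal_pdf.
move: total; rewrite integral_normal_pdf0_symmetric.
case: (\int[leb]_(x in _) _) => [r /eqP|//|//].
by rewrite -EFinD eqe => /eqP r1; have -> : r = 2^-1%R by lra.
Qed.
End normal_pdf0_halves.

Section posterior_mass_monotonicity.
Local Open Scope ereal_scope.
Context {R : realType}.

Lemma int_Rn_ge0 p (F : 'rV[R]_p -> \bar R) : (forall v, 0 <= F v) -> 0 <= int_Rn F.
Proof.
elim: p F => [|p IH] F F0 //=.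
by apply: integral_ge0 => x _; apply: IH.
Qed.

Lemma le_int_Rn p (F G : 'rV[R]_p -> \bar R) :
  (forall v, 0 <= F v) -> (forall v, F v <= G v) -> int_Rn F <= int_Rn G.
Proof.
elim: p F G => [|p IH] F G F0 FG //=.
by apply: ge0_le_integral_nonmeas => x _; [apply: int_Rn_ge0 | apply: IH].
Qed.

Lemma le_post_mass d (D : measurableType d) p (Pgamma : probability R R) (Gamma : set R)
    (Pdelta : probability D R) (q : R) (lik1 lik2 : 'rV[R]_p -> R -> D -> R -> \bar R) :
  (forall beta sigma delta gamma, Gamma gamma -> (0 < sigma)%R ->
     0 <= lik1 beta sigma delta gamma <= lik2 beta sigma delta gamma) ->
  post_mass Pgamma Gamma Pdelta q lik1 <= post_mass Pgamma Gamma Pdelta q lik2.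
Proof.
move=> lik12.
have inner_ge0 gamma delta sigma : Gamma gamma -> `]0%R, +oo[%classic sigma ->
    0 <= (sigma `^ (- q))%:E * int_Rn (fun beta => lik1 beta sigma delta gamma).
  rewrite /= in_itv /= andbT => Gg s0; rewrite mule_ge0 ?lee_fin ?powR_ge0 //.
  by apply: int_Rn_ge0 => beta; case/andP: (lik12 beta _ delta _ Gg s0).
have inner_le gamma delta sigma : Gamma gamma -> `]0%R, +oo[%classic sigma ->
    (sigma `^ (- q))%:E * int_Rn (fun beta => lik1 beta sigma delta gamma) <=
    (sigma `^ (- q))%:E * int_Rn (fun beta => lik2 beta sigma delta gamma).
  rewrite /= in_itv /= andbT => Gg s0; rewrite lee_wpmul2l ?lee_fin ?powR_ge0 //.
  by apply: le_int_Rn => beta; case/andP: (lik12 beta _ delta _ Gg s0).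
apply: ge0_le_integral_nonmeas => gamma Gg.
  by apply: integral_ge0 => delta _; apply: integral_ge0 => sigma; exact: inner_ge0.
apply: ge0_le_integral_nonmeas => delta _.
  by apply: integral_ge0 => sigma; exact: inner_ge0.
by apply: ge0_le_integral_nonmeas => sigma; [exact: inner_ge0 | exact: inner_le].
Qed.

End posterior_mass_monotonicity.

Section two_piece_density.
Local Open Scope ereal_scope.
Context {R : realType}.
Local Notation leb := (@lebesgue_measure R).
Local Notation phi := (normal_pdf (0 : R) 1).

Definition smn_kernel (z tau : R) : R :=
  \1_`[0%R, +oo[ tau * (Num.sqrt tau * phi (Num.sqrt tau * z)).

Lemma smn_kernel_ge0 z tau : (0 <= smn_kernel z tau)%R.
Proof. by rewrite mulr_ge0 // mulr_ge0 ?sqrtr_ge0 ?normal_pdf_ge0. Qed.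

Lemma smn_kernel_eq0 z tau : (tau <= 0)%R -> smn_kernel z tau = 0%R.
Proof.
rewrite le_eqVlt => /predU1P[->|tau0]; first by rewrite /smn_kernel sqrtr0 !mul0r mulr0.
by rewrite /smn_kernel indicE mem_setE in_itv /= andbT leNgt tau0 mul0r.
Qed.

Lemma smn_kernel_scale S tau x : (0 < S)%R -> (0 < tau)%R ->
  smn_kernel (x / S) tau = (S * normal_pdf 0 (S / Num.sqrt tau) x)%R.
Proof.
move=> S0 tau0; set r := Num.sqrt tau; set k := (S / r)%R.
have r0 : (0 < r)%R by rewrite sqrtr_gt0.
have k0 : (0 < k)%R by rewrite divr_gt0.
have := @normal_pdf0Z R _ _ (r * (x / S))%R k0 (oner_neq0 R).
rewrite mulr1 (_ : k * (r * (x / S)) = x)%R => [->|]; last by rewrite /k; field; rewrite !gt_eqF.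
rewrite /smn_kernel indicE mem_setE in_itv /= andbT ltW // mul1r -/r /k.
by field; rewrite !gt_eqF.
Qed.

Lemma measurable_smn_kernel d (T : measurableType d) (f g : T -> R) :
  measurable_fun setT f -> measurable_fun setT g ->
  measurable_fun setT (fun x => smn_kernel (f x) (g x)).
Proof.
have msqrt : measurable_fun setT (@Num.sqrt R).
  exact: continuous_measurable_fun (@sqrt_continuous R).
move=> mf mg; apply: measurable_funM.
  by apply: measurableT_comp mg; exact: measurable_indic.
apply: measurable_funM; first exact: measurableT_comp msqrt mg.
apply: measurableT_comp (measurable_normal_pdf _ _) _.
by apply: measurable_funM => //; exact: measurableT_comp msqrt mg.
Qed.

Lemma smn_densityE (T : Type) (H : T -> probability R R) delta z :
  smn_density H delta z = \int[H delta]_tau (smn_kernel z tau)%:E.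
Proof. exact: integral_EFin_indicE. Qed.

Lemma integral_indic_smn_kernel (A : set R) S tau :
  measurable A -> (0 < S)%R -> (0 < tau)%R ->
  \int[leb]_x (\1_A x * smn_kernel (x / S) tau)%:E =
  S%:E * \int[leb]_(x in A) (normal_pdf 0 (S / Num.sqrt tau) x)%:E.
Proof.
move=> mA S0 tau0; rewrite [in RHS]integral_EFin_indicE -ge0_integralZl //; last 3 first.
- apply: measurableT_comp => //; apply: measurable_funM; first exact: measurable_indic.
  exact: measurable_normal_pdf.
- by move=> x _; rewrite lee_fin mulr_ge0 ?normal_pdf_ge0.
- by rewrite lee_fin ltW.
by apply: eq_integral => x _; rewrite smn_kernel_scale // -EFinM mulrCA.
Qed.

Definition tp_kernel (sigma ag bg z tau : R) : R :=
  2 / (sigma * (ag + bg)) *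
  (\1_`]-oo, 0%R[ z * smn_kernel (z / (sigma * bg)) tau +
   \1_`[0%R, +oo[ z * smn_kernel (z / (sigma * ag)) tau).

Lemma measurable_tp_kernel sigma ag bg d (T : measurableType d) (f g : T -> R) :
  measurable_fun setT f -> measurable_fun setT g ->
  measurable_fun setT (fun x => tp_kernel sigma ag bg (f x) (g x)).
Proof.
move=> mf mg; apply: measurable_funM => //.
by apply: measurable_funD; apply: measurable_funM;
  do ?[by apply: measurableT_comp mf; exact: measurable_indic];
  apply: measurable_smn_kernel => //; exact: measurable_funM.
Qed.

Section tp_kernel_positive.
Variables (sigma ag bg : R).
Hypotheses (sigma_gt0 : (0 < sigma)%R) (ag_gt0 : (0 < ag)%R) (bg_gt0 : (0 < bg)%R).

Let tp_const_ge0 : (0 <= 2 / (sigma * (ag + bg)))%R.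
Proof. by rewrite divr_ge0 // mulr_ge0 ?addr_ge0 // ltW. Qed.

Lemma tp_kernel_ge0 z tau : (0 <= tp_kernel sigma ag bg z tau)%R.
Proof. by rewrite mulr_ge0 // addr_ge0 // mulr_ge0 // smn_kernel_ge0. Qed.

Lemma integral_tp_kernel_le1 c tau :
  \int[leb]_t (tp_kernel sigma ag bg (t - c) tau)%:E <= 1.
Proof.
have [tau_le0|tau_gt0] := leP tau 0%R.
  under eq_integral do rewrite /tp_kernel !smn_kernel_eq0 // !mulr0 addr0 mulr0.
  by rewrite integral0 lee01.
rewrite (@ge0_integral_shift R (- c) (fun z => (tp_kernel sigma ag bg z tau)%:E)); last 2 first.
- exact/measurable_EFinP/measurable_tp_kernel.
- by move=> z; rewrite lee_fin tp_kernel_ge0.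
have mhalf (A : set R) S : measurable A ->
    measurable_fun setT (fun z => (\1_A z * smn_kernel (z / S) tau)%:E).
  move=> mA; apply/measurable_EFinP/measurable_funM; first exact: measurable_indic.
  by apply: measurable_smn_kernel => //; exact: measurable_funM.
have half_ge0 (A : set R) S z : 0 <= (\1_A z * smn_kernel (z / S) tau)%:E.
  by rewrite lee_fin mulr_ge0 // smn_kernel_ge0.
have half S : (0 < S)%R ->
    \int[leb]_z (\1_`]-oo, 0%R[ z * smn_kernel (z / S) tau)%:E = (S / 2)%:E /\
    \int[leb]_z (\1_`[0%R, +oo[ z * smn_kernel (z / S) tau)%:E = (S / 2)%:E.
  move=> S0; have k0 : (S / Num.sqrt tau != 0)%R by rewrite gt_eqF // divr_gt0 // sqrtr_gt0.
  have [hN hP] := integral_normal_pdf0_halves _ k0.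
  by rewrite !integral_indic_smn_kernel // hN hP -EFinM.
under eq_integral do rewrite /tp_kernel EFinM EFinD.
rewrite ge0_integralZl ?lee_fin //; last 2 first.
- by apply: emeasurable_funD; exact: mhalf.
- by move=> z _; rewrite adde_ge0.
rewrite ge0_integralD //; last 2 first.
- exact: mhalf.
- exact: mhalf.
rewrite (half _ (mulr_gt0 sigma_gt0 bg_gt0)).1 (half _ (mulr_gt0 sigma_gt0 ag_gt0)).2.
rewrite -EFinD -EFinM lee_fin.
suff -> : (2 / (sigma * (ag + bg)) * (sigma * bg / 2 + sigma * ag / 2) = 1)%R by [].
by field; rewrite !gt_eqF ?addr_gt0.
Qed.

End tp_kernel_positive.

End two_piece_density.

Section two_piece_likelihood.
Local Open Scope ereal_scope.
Context {R : realType} (T : Type) (H : T -> probability R R) (a b : R -> R).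
Local Notation leb := (@lebesgue_measure R).

Lemma tp_density_ge0 sigma delta gamma z :
  (0 < sigma)%R -> (0 < a gamma)%R -> (0 < b gamma)%R ->
  0 <= tp_density H a b 0 sigma delta gamma z.
Proof.
move=> s0 a0 b0; rewrite /tp_density mule_ge0 //.
  by rewrite lee_fin divr_ge0 // mulr_ge0 ?addr_ge0 // ltW.
by case: ifP => _; rewrite smn_densityE; apply: integral_ge0 => tau _;
  rewrite lee_fin smn_kernel_ge0.
Qed.

Lemma tp_densityE sigma delta gamma z :
  (0 < sigma)%R -> (0 < a gamma)%R -> (0 < b gamma)%R ->
  tp_density H a b 0 sigma delta gamma z =
  \int[H delta]_tau (tp_kernel sigma (a gamma) (b gamma) z tau)%:E.
Proof.
move=> s0 a0 b0; rewrite /tp_density subr0 !smn_densityE.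
have K0 : 0 <= (2 / (sigma * (a gamma + b gamma)))%:E.
  by rewrite lee_fin divr_ge0 // mulr_ge0 ?addr_ge0 // ltW.
have smn_ge0 (u tau : R) : 0 <= (smn_kernel u tau)%:E by rewrite lee_fin smn_kernel_ge0.
case: ltP => hz; (rewrite -ge0_integralZl //;
    last exact/measurable_EFinP/measurable_smn_kernel);
  apply: eq_integral => tau _; rewrite /tp_kernel -EFinM !indicE !mem_setE !in_itv /= andbT.
- by rewrite hz leNgt hz mul1r mul0r addr0.
- by rewrite ltNge hz mul0r mul1r add0r.
Qed.

Lemma tp_density_integral_le1 sigma delta gamma (C : set R) c :
  (0 < sigma)%R -> (0 < a gamma)%R -> (0 < b gamma)%R ->
  \int[leb]_(t in C) tp_density H a b 0 sigma delta gamma (t - c) <= 1.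
Proof.
move=> s0 a0 b0.
apply: le_trans; first by apply: ge0_integral_le_setT => t; exact: tp_density_ge0.
under eq_integral do rewrite tp_densityE //.
pose f (z : R * R) := (tp_kernel sigma (a gamma) (b gamma) (z.1 - c) z.2)%:E.
have mf : measurable_fun setT f.
  apply/measurable_EFinP/measurable_tp_kernel => //.
  exact: measurable_funB measurable_fst (measurable_cst _).
have f0 z : 0 <= f z by rewrite lee_fin tp_kernel_ge0.
rewrite (@fubini_tonelli _ _ _ _ R leb (H delta) f mf f0) /=.
apply: (@le_trans _ _ (\int[H delta]_tau 1)).
  apply: ge0_le_integral_nonmeas => tau _; last exact: integral_tp_kernel_le1.
  by apply: integral_ge0 => t _; exact: f0.
by rewrite integral_cst // mul1e probability_le1.
Qed.

Lemma lik_full_le_lik_obs n p (X : 'M[R]_(n, p)) y cens C beta sigma delta gamma :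
  (0 < sigma)%R -> (0 < a gamma)%R -> (0 < b gamma)%R ->
  0 <= lik_full H a b X y cens C beta sigma delta gamma <=
  lik_obs H a b X y cens beta sigma delta gamma.
Proof.
move=> s0 a0 b0.
have factor_ge0 j : 0 <= (if cens j then
      \int[leb]_(t in C j) tp_density H a b 0 sigma delta gamma (t - lin_pred X j beta)
    else tp_density H a b 0 sigma delta gamma (y j - lin_pred X j beta)).
  by case: (cens j); [apply: integral_ge0 => t _|]; exact: tp_density_ge0.
rewrite /lik_full prode_ge0 //= /lik_obs [X in _ <= X]big_mkcond /=; apply: lee_prod => // j _.
by case: (cens j) => //=; exact: tp_density_integral_le1.
Qed.

End two_piece_likelihood.

Theorem theorem4p1 (R : realType)
  (* shape parameter space Delta, with proper prior Pdelta *)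
  (d : measure_display) (Delta : measurableType d) (Pdelta : probability Delta R)
  (* mixing distributions H(. | delta) on R_+ *)
  (H : Delta -> probability R R)
  (H_supp : forall delta, H delta [set` `[0%R, +oo[] = 1%E)
  (H_meas : forall U : set R, measurable U ->
     measurable_fun [set: Delta] (fun delta => H delta U))
  (* skewness parameter space Gamma, functions a, b, proper prior Pgamma *)
  (Gamma : set R) (mGamma : measurable Gamma) (a b : R -> R)
  (a_pos : forall g, Gamma g -> 0 < a g) (b_pos : forall g, Gamma g -> 0 < b g)
  (Pgamma : probability R R) (Pgamma_supp : Pgamma Gamma = 1%E)
  (* prior exponent on sigma *)
  (q : R) (q_ge0 : 0 <= q)
  (* design matrix of full column rank, data, censoring indicators and sets *)
  (n p : nat) (X : 'M[R]_(n, p)) (X_rank : \rank X = p)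
  (y : 'I_n -> R) (cens : 'I_n -> bool) (C : 'I_n -> set R)
  (mC : forall j, cens j -> measurable (C j)) :
  (post_mass Pgamma Gamma Pdelta q (fun beta sigma delta gamma =>
      lik_obs H a b X y cens beta sigma delta gamma) < +oo)%E ->
  (post_mass Pgamma Gamma Pdelta q (fun beta sigma delta gamma =>
      lik_full H a b X y cens C beta sigma delta gamma) < +oo)%E.
Proof.
(* The comparison is pointwise in the parameters. *)
apply: le_lt_trans; apply: le_post_mass => beta sigma delta gamma Gg s0.
exact: lik_full_le_lik_obs (a_pos _ Gg) (b_pos _ Gg).
Qed.
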